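(* Consider the balanced regret multi-representative selection problem \[\min_{\pmb x\in\mathcal X}\ \max_{\pmb\delta\in\Delta(\Gamma),\,\pmb y\in\mathcal X}\ \min_{\pmb\epsilon\in\Delta(\Gamma')}\ \sum_{i\in[n]}(\hat c_i+d_i\delta_i+d_i\epsilon_i)(x_i-y_i),\quad \mathcal X=\Big\{\pmb x\in\{0,1\}^n:\sum_{i\in T_\ell}x_i=p_\ell\ \forall\ell\in[L]\Big\}.\] Let $\ell\in[L]$ and let $i,j\in T_\ell$ be two items with $\hat c_i\le\hat c_j$ and $\hat c_i+d_i\le\hat c_j+d_j$. Then there is an optimal solution $\pmb x$ with $x_i\ge x_j$.
   Context: $[n]=\{1,\dots,n\}$; $T_1\cup\dots\cup T_L=[n]$ is a partition and $p_\ell\le|T_\ell|$ are integers; $\hat c_i\ge0$, $d_i\ge0$; $\Gamma,\Gamma'\ge0$ are integers and $\Delta(k)=\{\pmb\delta\in\{0,1\}^n:\sum_i\delta_i\le k\}$. *)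

From mathcomp Require Import all_boot all_order all_algebra.
Set Implicit Arguments. Unset Strict Implicit. Unset Printing Implicit Defensive.
Import Order.TTheory GRing.Theory Num.Theory.
Local Open Scope ring_scope.

Notation bvec n := {ffun 'I_n -> bool}.

Definition bzero (n : nat) : bvec n := [ffun _ => false].

Definition Delta (n k : nat) : {set bvec n} :=
  [set dl : bvec n | (\sum_(i < n) (dl i : nat) <= k)%N].

Definition feas (n L : nat) (T : 'I_L -> {set 'I_n}) (p : 'I_L -> nat)
  : {set bvec n} :=
  [set x : bvec n | [forall l : 'I_L, (\sum_(i in T l) (x i : nat))%N == p l]].

Section Obj.
Variables (R : realFieldType) (n L : nat) (T : 'I_L -> {set 'I_n})
  (p : 'I_L -> nat) (c d : 'I_n -> R) (Gam Gam' : nat).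

Definition inner (x dl y e : bvec n) : R :=
  \sum_(i < n) (c i + d i * (dl i)%:R + d i * (e i)%:R) * ((x i)%:R - (y i)%:R).

(* min over eps in Delta(Gam'); the seed value (eps = 0) belongs to Delta(Gam'),
   so this is exactly the minimum. *)
Definition innermin (x dl y : bvec n) : R :=
  \big[Num.min/inner x dl y (bzero n)]_(e in Delta n Gam') inner x dl y e.

(* max over delta in Delta(Gam), y in X; the seed value (delta = 0, y = x) belongs
   to the index set whenever x is in X, so this is exactly the maximum for x in X. *)
Definition obj (x : bvec n) : R :=
  \big[Num.max/innermin x (bzero n) x]_(q : bvec n * bvec n |
        (q.1 \in Delta n Gam) && (q.2 \in feas T p)) innermin x q.1 q.2.
End Obj.

From mathcomp Require Import all_boot all_order all_algebra fingroup perm.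
From mathcomp Require Import lra.
Set Implicit Arguments. Unset Strict Implicit. Unset Printing Implicit Defensive.
Import Order.TTheory GRing.Theory Num.Theory.
Local Open Scope ring_scope.

(** Take an optimal solution x; if it uses j but not i, exchange the two
    items.  Every adversary (delta, y) against the exchanged solution is
    dominated by one against x: exchange y_i and y_j and move the deviation
    delta_i onto j.  Conversely, every second-stage response eps to the latter
    is matched by a response to the former of no larger value, since item i
    is cheaper than item j both nominally and under deviation.  So the
    exchanged solution is no worse than x, hence optimal, and uses i. *)

Lemma exists_subset_card (I : finType) (B : {set I}) (k : nat) :
  (k <= #|B|)%N -> exists A : {set I}, A \subset B /\ #|A| = k.
Proof.
move=> le_kB.
have : (0 < #|[set A : {set I} | A \subset B & #|A| == k]|)%N.
  by rewrite cards_draws bin_gt0.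
by case/card_gt0P => A; rewrite inE => /andP[sAB /eqP cardA]; exists A.
Qed.

Lemma big_pair (n : nat) (i j : 'I_n) (nij : i != j)
    (V : Type) (idx : V) (op : Monoid.com_law idx) (F : 'I_n -> V) :
  \big[op/idx]_(k < n) F k =
  op (F i) (op (F j) (\big[op/idx]_(k | (k != i) && (k != j)) F k)).
Proof. by rewrite (bigD1 i) //= (bigD1 j) 1?eq_sym. Qed.

Definition permv (n : nat) (s : {perm 'I_n}) (v : bvec n) : bvec n :=
  [ffun k => v (s k)].

Section Blocks.
Variables (n L : nat) (T : 'I_L -> {set 'I_n}) (p : 'I_L -> nat).
Hypothesis hdisj : forall l1 l2 : 'I_L, l1 != l2 -> [disjoint T l1 & T l2].

Lemma feas_nonempty :
  (forall l, (p l <= #|T l|)%N) -> exists x : bvec n, x \in feas T p.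
Proof.
move=> hp.
have [S hS] := fin_all_exists (fun l => exists_subset_card (hp l)).
exists [ffun k => k \in \bigcup_l S l]; rewrite inE; apply/forallP => l.
have [sST <-] := hS l.
have in_S k : k \in T l -> (k \in \bigcup_l S l) = (k \in S l).
  move=> kT; apply/bigcupP/idP => [[l' _ kS]|]; last by exists l.
  case: (eqVneq l' l) => [<- //|nl].
  have [/subsetP/(_ k kS) kT' _] := hS l'.
  by rewrite (disjointFr (hdisj nl) kT') in kT.
apply/eqP; rewrite -sum1_card -(eq_bigl _ _ (fun k => andb_idl (subsetP sST k))).
rewrite big_mkcondr /=; apply: eq_bigr => k kT.
by rewrite ffunE in_S //; case: (k \in S l).
Qed.

Lemma feas_permv (s : {perm 'I_n}) (v : bvec n) :
  (forall l k, (s k \in T l) = (k \in T l)) ->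
  v \in feas T p -> permv s v \in feas T p.
Proof.
rewrite !inE => sT /forallP hv; apply/forallP => l.
rewrite -(eqP (hv l)) [X in _ == X](reindex_inj (@perm_inj _ s)) /=.
by apply/eqP/eq_big => k; rewrite ?ffunE ?sT.
Qed.

Lemma tperm_blocks (l : 'I_L) (i j : 'I_n) : i \in T l -> j \in T l ->
  forall l' k, (tperm i j k \in T l') = (k \in T l').
Proof.
move=> iT jT l' k.
have same_block : (i \in T l') = (j \in T l').
  case: (eqVneq l l') => [<-|nl]; first by rewrite iT jT.
  by rewrite (disjointFr (hdisj nl) iT) (disjointFr (hdisj nl) jT).
by case: tpermP => [->|->|//]; rewrite same_block.
Qed.

End Blocks.

Lemma bzero_Delta (n K : nat) : bzero n \in Delta n K.
Proof. by rewrite inE big1 // => k _; rewrite ffunE. Qed.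

Lemma Delta_exchange (n K : nat) (i j : 'I_n) (v w : bvec n) : i != j ->
  (w i + w j <= v i + v j)%N -> (forall k, k != i -> k != j -> w k = v k) ->
  v \in Delta n K -> w \in Delta n K.
Proof.
move=> nij le_wv eq_wv; rewrite !inE !(big_pair nij) /=; apply: leq_trans.
rewrite !addnA leq_add // (eq_bigr (fun k => v k : nat)) // => k /andP[ki kj].
by rewrite eq_wv.
Qed.

Section Objective.
Variables (R : realFieldType) (n L : nat) (T : 'I_L -> {set 'I_n})
  (p : 'I_L -> nat) (c d : 'I_n -> R) (Gam Gam' : nat).

Lemma innermin_le x dl y e : e \in Delta n Gam' ->
  innermin c d Gam' x dl y <= inner c d x dl y e.
Proof. by move=> eD; rewrite /innermin (bigD1 e) //= ge_min lexx. Qed.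

Lemma le_innermin x dl y m :
  (forall e, e \in Delta n Gam' -> m <= inner c d x dl y e) ->
  m <= innermin c d Gam' x dl y.
Proof.
move=> le_m; apply: (big_ind (fun v => m <= v)) => //.
- exact: le_m (bzero_Delta _ _).
- by move=> a b ma mb; rewrite le_min ma mb.
Qed.

Lemma le_obj x dl y m : dl \in Delta n Gam -> y \in feas T p ->
  m <= innermin c d Gam' x dl y -> m <= obj T p c d Gam Gam' x.
Proof.
move=> dlD yF le_m; rewrite /obj (bigD1 (dl, y)) /=; last by rewrite dlD yF.
by rewrite le_max le_m.
Qed.

Lemma obj_le x m : x \in feas T p ->
  (forall dl y, dl \in Delta n Gam -> y \in feas T p ->
     innermin c d Gam' x dl y <= m) ->
  obj T p c d Gam Gam' x <= m.
Proof.
move=> xF le_m; apply: (big_ind (fun v => v <= m)).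
- exact: le_m (bzero_Delta _ _) xF.
- by move=> a b am bm; rewrite ge_max am bm.
- by move=> [dl y] /andP[]; exact: le_m.
Qed.

End Objective.

Definition cost (R : pzRingType) (ck dk : R) (dl e x y : bool) : R :=
  (ck + dk * (dl : nat)%:R + dk * (e : nat)%:R) * ((x : nat)%:R - (y : nat)%:R).

(* The two order hypotheses say c_i + d_i b <= c_j + d_j b for b : bool;
   together with d_i, d_j >= 0 this settles each of the 64 cases. *)
Lemma cost_exchange (R : realDomainType) (ci cj di dj : R)
    (dli dlj ei ej yi yj : bool) :
  0 <= di -> 0 <= dj -> ci <= cj -> ci + di <= cj + dj ->
  cost ci di dli false true yi + cost cj dj dlj (yj && (ei || ej)) false yj
  <= cost ci di false ei false yj + cost cj dj dli ej true yi.
Proof.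
by rewrite /cost; case: dli dlj ei ej yi yj => [] [] [] [] [] [] /=; lra.
Qed.

Lemma inner_costE (R : realFieldType) (n : nat) (c d : 'I_n -> R)
    (x dl y e : bvec n) :
  inner c d x dl y e = \sum_(k < n) cost (c k) (d k) (dl k) (e k) (x k) (y k).
Proof. by []. Qed.

Section Exchange.
Variables (R : realFieldType) (n : nat) (c d : 'I_n -> R) (i j : 'I_n).
Hypotheses (nij : i != j) (di_ge0 : 0 <= d i) (dj_ge0 : 0 <= d j).
Hypotheses (le_cij : c i <= c j) (le_cdij : c i + d i <= c j + d j).
Variables (L : nat) (T : 'I_L -> {set 'I_n}) (p : 'I_L -> nat) (Gam Gam' : nat).
Hypothesis hdisj : forall l1 l2 : 'I_L, l1 != l2 -> [disjoint T l1 & T l2].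
Variable l : 'I_L.
Hypotheses (iT : i \in T l) (jT : j \in T l).

Definition dev_shift (dl : bvec n) : bvec n :=
  [ffun k => if k == i then false else if k == j then dl i else dl k].

Definition eps_merge (y e : bvec n) : bvec n :=
  [ffun k => if k == i then false else if k == j then y j && (e i || e j) else e k].

Lemma dev_shift_Delta K dl : dl \in Delta n K -> dev_shift dl \in Delta n K.
Proof.
apply: Delta_exchange nij _ _ => [|k ki kj]; rewrite !ffunE.
  by rewrite eqxx eq_sym (negbTE nij) eqxx; case: (dl i).
by rewrite (negbTE ki) (negbTE kj).
Qed.

Lemma eps_merge_Delta K y e : e \in Delta n K -> eps_merge y e \in Delta n K.
Proof.
apply: Delta_exchange nij _ _ => [|k ki kj]; rewrite !ffunE.
  by rewrite eqxx eq_sym (negbTE nij) eqxx; case: (e i); case: (e j); case: (y j).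
by rewrite (negbTE ki) (negbTE kj).
Qed.

Lemma inner_exchange (x dl y e : bvec n) : x i = false -> x j = true ->
  inner c d (permv (tperm i j) x) dl y (eps_merge y e)
  <= inner c d x (dev_shift dl) (permv (tperm i j) y) e.
Proof.
move=> xi xj; rewrite !inner_costE !(big_pair nij) /= !addrA; apply: lerD.
  rewrite !ffunE tpermL tpermR !eqxx eq_sym (negbTE nij) xi xj.
  exact: cost_exchange.
apply: ler_sum => k /andP[ki kj].
by rewrite !ffunE (negbTE ki) (negbTE kj) tpermD // eq_sym.
Qed.

Lemma obj_exchange_le (x : bvec n) :
  x \in feas T p -> x i = false -> x j = true ->
  obj T p c d Gam Gam' (permv (tperm i j) x) <= obj T p c d Gam Gam' x.
Proof.
move=> xF xi xj; have blocks := tperm_blocks hdisj iT jT.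
apply: obj_le => [|dl y dlD yF]; first exact: feas_permv.
apply: le_obj (dev_shift_Delta dlD) (feas_permv blocks yF) _.
apply: le_innermin => e eD.
apply: le_trans (innermin_le _ _ _ _ _ (eps_merge_Delta y eD)) _.
exact: inner_exchange.
Qed.

End Exchange.

Theorem lemma7 (R : realFieldType) (n L : nat) (T : 'I_L -> {set 'I_n})
  (p : 'I_L -> nat) (c d : 'I_n -> R) (Gam Gam' : nat)
  (hdisj : forall l1 l2 : 'I_L, l1 != l2 -> [disjoint T l1 & T l2])
  (hcover : \bigcup_(l < L) T l = [set: 'I_n])
  (hp : forall l : 'I_L, (p l <= #|T l|)%N)
  (hc : forall i, 0 <= c i) (hd : forall i, 0 <= d i)
  (l : 'I_L) (i j : 'I_n) (hi : i \in T l) (hj : j \in T l) (hij : i != j)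
  (hcij : c i <= c j) (hcdij : c i + d i <= c j + d j) :
  exists x : bvec n,
    [/\ x \in feas T p,
        (forall x' : bvec n, x' \in feas T p ->
            obj T p c d Gam Gam' x <= obj T p c d Gam Gam' x')
      & ((x j : nat) <= x i)%N].
Proof.
have [x0 x0F] := feas_nonempty hdisj hp.
have [x xF x_opt] := arg_minP (obj T p c d Gam Gam') x0F.
case: (boolP (x j <= x i)%N) => [le_ji|lt_ij]; first by exists x.
have [xi xj] : x i = false /\ x j = true by move: lt_ij; case: (x i); case: (x j).
exists (permv (tperm i j) x); split.
- exact: feas_permv (tperm_blocks hdisj hi hj) xF.
- move=> x' x'F; apply: le_trans (x_opt _ x'F).
  exact: (obj_exchange_le hij (hd i) (hd j) hcij hcdij Gam Gam' hdisj hi hj xF xi xj).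
- by rewrite !ffunE tpermL tpermR xi xj.
Qed.
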